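(* Let $\mathbf{f}$ be the Fibonacci word. For every index $x\ge0$ of $\mathbf{f}$ and every positive integer $n$, there is a $\lfloor F_n\frac{\sqrt5}{2}\rfloor$-antipower with block length $2F_n$ starting at position $x$ of $\mathbf{f}$.
   Context: The Fibonacci word is $\mathbf{f}=\sigma^{\omega}(0)=0100101001001\cdots$, the fixed point of the morphism $\sigma(0)=01$, $\sigma(1)=0$; it is $0$-indexed. $F_1=F_2=1$, $F_n=F_{n-1}+F_{n-2}$. A $k$-antipower is a word that is the concatenation of $k$ pairwise distinct words (blocks) of equal length; that common length is the block length. *)

From mathcomp Require Import all_boot.
Set Implicit Arguments. Unset Strict Implicit. Unset Printing Implicit Defensive.

Definition sigma_letter (a : nat) : seq nat := if a == 0 then [:: 0; 1] else [:: 0].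
Definition sigma (w : seq nat) : seq nat := flatten (map sigma_letter w).

(* sigma^k(0) has length F_{k+2} >= k+1, and each is a prefix of the next,
   so the i-th letter of the fixed point sigma^omega(0) is the i-th letter of
   sigma^(i+1)(0). *)
Definition fibw (i : nat) : nat := nth 0 (iter i.+1 sigma [:: 0]) i.

Fixpoint fib (n : nat) : nat :=
  match n with
  | 0 => 0
  | S m => match m with 0 => 1 | S p => fib m + fib p end
  end.

Definition factor (p m : nat) : seq nat := mkseq (fun i => fibw (p + i)) m.

Definition antipower_at (x k m : nat) : Prop :=
  forall i j, i < j -> j < k -> factor (x + i * m) m != factor (x + j * m) m.

(* The Fibonacci word codes the rotation by phi: its letter i is 1 exactly
   when the fractional part {(i+1) phi} lies below 2 - phi.  Two blocks of
   length 2 F_n starting 2 t F_n apart therefore compare the points {c phi}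
   with the points {c phi} + e, where e = 2 t (F_n phi - F_(n+1)) has size
   2 t rho^n (rho = 1/phi).  The choice of k gives 2 t + 2 <= sqrt 5 F_n,
   which puts |e| in [rho^(n-1), 1 - rho^(n-1)]; hence some interval of length
   rho^(n-1) is pushed across 2 - phi by e.  Every F_(n+1) <= 2 F_n
   consecutive points {c phi} meet such an interval, since a monotone walk
   with steps at most rho^(n-1) visits them, so the two blocks differ. *)

From Stdlib Require Import Reals Lra Psatz ZArith.
From mathcomp Require Import all_boot zify.

Set Implicit Arguments.
Unset Strict Implicit.

(** * Fibonacci numbers and words *)

Lemma fibSS n : fib n.+2 = fib n.+1 + fib n.
Proof. by []. Qed.

Lemma fib_gt0 n : 0 < fib n.+1.
Proof. by elim: n => // n IH; rewrite fibSS addn_gt0 IH. Qed.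

Lemma ltn_fib n : n < fib n.+2.
Proof. by elim: n => // n IH; rewrite fibSS; have := fib_gt0 n; lia. Qed.

Lemma fib_leqS n : fib n <= fib n.+1.
Proof. by case: n => // n; rewrite fibSS leq_addr. Qed.

Definition fibword m := iter m sigma [:: 0].

Lemma sigma_cat u v : sigma (u ++ v) = sigma u ++ sigma v.
Proof. by rewrite /sigma map_cat flatten_cat. Qed.

Lemma iter_sigma_cat m u v :
  iter m sigma (u ++ v) = iter m sigma u ++ iter m sigma v.
Proof. by elim: m => //= m ->; rewrite sigma_cat. Qed.

Lemma fibwordSS m : fibword m.+2 = fibword m.+1 ++ fibword m.
Proof.
have sigma0 : sigma [:: 0] = [:: 0] ++ [:: 1] by [].
by rewrite /fibword (iterSr m.+1) sigma0 iter_sigma_cat [iter _ _ [:: 1]]iterSr.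
Qed.

Lemma mkseqD (T : Type) (f : nat -> T) a b :
  mkseq f (a + b) = mkseq f a ++ mkseq (fun i => f (a + i)) b.
Proof.
by rewrite /mkseq iotaD map_cat add0n -{2}[a]addn0 iotaDl -map_comp.
Qed.

(** * The golden ratio *)

Local Open Scope R_scope.

Definition phi : R := (1 + sqrt 5) / 2.
Definition rho : R := phi - 1.

Lemma sqrt5E : sqrt 5 = 2 * phi - 1.
Proof. by rewrite /phi; field. Qed.

Lemma phi_sq : phi * phi = phi + 1.
Proof. have := sqrt_sqrt 5; rewrite /phi; nra. Qed.

Lemma rho_phi : rho * phi = 1.
Proof. by have := phi_sq; rewrite /rho; nra. Qed.

Lemma rho_sq : rho * rho = 1 - rho.
Proof. by have := phi_sq; rewrite /rho; nra. Qed.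

Lemma rho_bounds : 0.6 < rho < 0.62.
Proof. have := sqrt_sqrt 5; have := sqrt_pos 5; rewrite /rho /phi; split; nra. Qed.

Lemma rho_pow_gt0 n : 0 < rho ^ n.
Proof. by apply: pow_lt; have := rho_bounds; lra. Qed.

Lemma Rabs_opp_rho_pow n : Rabs ((- rho) ^ n) = rho ^ n.
Proof.
by rewrite -RPow_abs Rabs_Ropp Rabs_right //; have := rho_bounds; lra.
Qed.

Lemma opp_rho_pow_cases n : (- rho) ^ n = rho ^ n \/ (- rho) ^ n = - rho ^ n.
Proof.
have := Rabs_opp_rho_pow n; rewrite /Rabs; case: Rcase_abs => _ <-; [right|left]; lra.
Qed.

Lemma rho_pow_le_sq m : (2 <= m)%N -> rho ^ m <= rho * rho.
Proof.
move=> m_ge2; have [r_gt r_lt] := rho_bounds.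
have -> : m = (m - 2 + 2)%N by lia.
rewrite pow_add /=.
have : rho ^ (m - 2)%N <= 1 by elim: (m - 2)%N => /= [|n IH]; nra.
have := rho_pow_gt0 (m - 2)%N; nra.
Qed.

Lemma fibS_sub_mul_root x n : x * x = x + 1 ->
  INR (fib n.+1) - INR (fib n) * x = (1 - x) ^ n.
Proof.
move=> xx; have yy : (1 - x) * (1 - x) = (1 - x) + 1 by nra.
suff /(_ n)[] : forall k, INR (fib k.+1) - INR (fib k) * x = (1 - x) ^ k /\
                       INR (fib k.+2) - INR (fib k.+1) * x = (1 - x) ^ k.+1 by [].
clear n; elim=> [|n [IH1 IH2]]; first by rewrite /=; split; lra.
split=> //; have -> : (1 - x) ^ n.+2 = (1 - x) ^ n.+1 + (1 - x) ^ n.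
  by rewrite /= -Rmult_assoc yy; ring.
by rewrite -IH1 -IH2 !fibSS !plus_INR; ring.
Qed.

Lemma fibS_sub_mul_phi n : INR (fib n.+1) - INR (fib n) * phi = (- rho) ^ n.
Proof. by rewrite fibS_sub_mul_root ?phi_sq // /rho; congr (_ ^ _); ring. Qed.

Lemma binet n : sqrt 5 * INR (fib n) = phi ^ n - (- rho) ^ n.
Proof.
have conj_sq : (1 - phi) * (1 - phi) = (1 - phi) + 1 by have := phi_sq; nra.
have := @fibS_sub_mul_root _ n conj_sq; have := fibS_sub_mul_phi n.
rewrite sqrt5E /rho (_ : 1 - (1 - phi) = phi); [lra | ring].
Qed.

Definition Zfib n := Z.of_nat (fib n).

Lemma ZfibSS n : Zfib n.+2 = (Zfib n.+1 + Zfib n)%Z.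
Proof. by rewrite /Zfib fibSS; lia. Qed.

Lemma cassini j : ((Zfib j * Zfib j.+2 - Zfib j.+1 ^ 2) ^ 2 = 1)%Z.
Proof. by elim: j => [|j IH] //; rewrite !ZfibSS in IH *; lia. Qed.

Lemma fib_basis j (c a : Z) : exists u v : Z,
  c = (u * Zfib j + v * Zfib j.+1)%Z /\ a = (u * Zfib j.+1 + v * Zfib j.+2)%Z.
Proof.
set e := (Zfib j * Zfib j.+2 - Zfib j.+1 ^ 2)%Z.
have ee : (e * e = 1)%Z by rewrite -Z.pow_2_r cassini.
exists (e * (c * Zfib j.+2 - a * Zfib j.+1))%Z, (e * (a * Zfib j - c * Zfib j.+1))%Z.
split; rewrite -[LHS]Z.mul_1_l -ee /e; ring.
Qed.

Lemma lin_comb_signs (p q c u v : Z) : (1 <= p)%Z -> (1 <= c < q)%Z ->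
  c = (u * p + v * q)%Z -> (1 <= u /\ v <= 0 \/ u <= -1 /\ 1 <= v)%Z.
Proof.
move=> p_ge1 c_range cE.
have [v_ge1 | v_le0] := Z.le_gt_cases 1 v; first by right; nia.
by left; split; nia.
Qed.

Lemma mul_phi_dist_int_ge (a : Z) j c : (0 < j)%N -> (0 < c < fib j.+1)%N ->
  rho ^ j <= Rabs (INR c * phi - IZR a).
Proof.
(* (c, a) = u (F_j, F_(j+1)) + v (F_(j+1), F_(j+2)) with u, v of opposite
   signs, and then c phi - a = (- rho)^j (v rho - u). *)
move=> j_gt0 /andP[c_gt0 c_lt].
have [u [v [cE aE]]] := fib_basis j (Z.of_nat c) a.
have [fib_ge1 c_lt'] : (1 <= Zfib j)%Z /\ (1 <= Z.of_nat c < Zfib j.+1)%Z.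
  by case: j j_gt0 {cE aE} c_lt => // j _ c_lt; have := fib_gt0 j; rewrite /Zfib; lia.
have signs := lin_comb_signs fib_ge1 c_lt' cE.
have e1 : INR (fib j) * phi - INR (fib j.+1) = - (- rho) ^ j.
  by have := fibS_sub_mul_phi j; lra.
have e2 : INR (fib j.+1) * phi - INR (fib j.+2) = rho * (- rho) ^ j.
  by have := fibS_sub_mul_phi j.+1; rewrite [(- rho) ^ j.+1]/=; lra.
have -> : INR c * phi - IZR a = (- rho) ^ j * (IZR v * rho - IZR u).
  rewrite (INR_IZR_INZ c) cE aE /Zfib !plus_IZR !mult_IZR -!INR_IZR_INZ.
  transitivity (IZR u * (INR (fib j) * phi - INR (fib j.+1)) +
                IZR v * (INR (fib j.+1) * phi - INR (fib j.+2))); first ring.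
  by rewrite e1 e2; ring.
have coeff_ge1 : 1 <= Rabs (IZR v * rho - IZR u).
  have := rho_bounds.
  case: signs => [[/IZR_le u_ge /IZR_le v_le] | [/IZR_le u_le /IZR_le v_ge]] ?;
    [rewrite Rabs_left1 | rewrite Rabs_right]; nra.
by rewrite Rabs_mult Rabs_opp_rho_pow; have := rho_pow_gt0 j; nra.
Qed.

Definition frac_phi (c : nat) : R := frac_part (INR c * phi).

Lemma frac_partE r z : IZR z <= r < IZR z + 1 -> frac_part r = r - IZR z.
Proof.
move=> r_range; rewrite /frac_part /Int_part.
rewrite -(tech_up r (z + 1)) ?plus_IZR ?minus_IZR ?opp_IZR; lra.
Qed.

Lemma frac_phi_range c : 0 <= frac_phi c < 1.
Proof. by have := base_fp (INR c * phi); rewrite /frac_phi; lra. Qed.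

Lemma frac_phi_int c : exists z, INR c * phi = frac_phi c + IZR z.
Proof. by exists (Int_part (INR c * phi)); rewrite /frac_phi /frac_part; ring. Qed.

Lemma frac_phi_add c d (w : Z) e : INR d * phi = IZR w + e ->
  0 <= frac_phi c + e < 1 -> frac_phi (c + d) = frac_phi c + e.
Proof.
move=> dE range; have [z cE] := frac_phi_int c.
rewrite [frac_phi (c + d)]/frac_phi plus_INR Rmult_plus_distr_r cE dE.
by rewrite (@frac_partE _ (z + w)%Z) plus_IZR; lra.
Qed.

Lemma frac_phi_bounds j c : (0 < j)%N -> (0 < c < fib j.+1)%N ->
  rho ^ j <= frac_phi c <= 1 - rho ^ j.
Proof.
move=> j_gt0 c_range; have [z cE] := frac_phi_int c.
have := mul_phi_dist_int_ge z j_gt0 c_range.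
have := mul_phi_dist_int_ge (z + 1) j_gt0 c_range.
have := frac_phi_range c; rewrite cE plus_IZR.
by rewrite /Rabs; do 2 case: Rcase_abs; lra.
Qed.

Lemma dist_frac_phi_2_sub_phi j c : (0 < j)%N -> (c.+1 < fib j.+1)%N ->
  rho ^ j <= Rabs (frac_phi c - (2 - phi)).
Proof.
(* {c phi} - (2 - phi) is (c + 1) phi minus an integer. *)
move=> j_gt0 c_lt; have [z cE] := frac_phi_int c.
have c1_range : (0 < c.+1 < fib j.+1)%N by rewrite ltn0Sn.
have := mul_phi_dist_int_ge (z + 2) j_gt0 c1_range.
by rewrite S_INR plus_IZR; congr (_ <= Rabs _); rewrite Rmult_plus_distr_r cE; ring.
Qed.

(** * The Fibonacci word as a rotation coding *)

Definition rot_code (c : nat) : nat :=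
  if Rlt_dec (frac_phi c) (2 - phi) then 1%N else 0%N.

Lemma shift_keeps_side (b d y e : R) : Rabs e < d -> d <= y <= 1 - d ->
  d <= Rabs (y - b) -> 0 <= y + e < 1 /\ (y < b <-> y + e < b).
Proof.
rewrite /Rabs; do 2 case: Rcase_abs => ?; move=> *; (split; [lra | split=> ?; lra]).
Qed.

Lemma rot_code_small :
  [/\ rot_code 1 = 0, rot_code 2 = 1, rot_code 3 = 0, rot_code 4 = 0 & rot_code 5 = 1]%N.
Proof.
have [phi_gt phi_lt] : 1.6 < phi < 1.62 by have := rho_bounds; rewrite /rho; lra.
have fracE c (z : Z) :
    IZR z <= INR c * phi < IZR z + 1 -> frac_phi c = INR c * phi - IZR z.
  exact: frac_partE.
rewrite /rot_code (fracE 1%N 1%Z) ?(fracE 2%N 3%Z) ?(fracE 3%N 4%Z) ?(fracE 4%N 6%Z)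
  ?(fracE 5%N 8%Z) /=; try (split; lra).
by split; case: Rlt_dec => //=; lra.
Qed.

Lemma rot_code_add_fib m c : (0 < c <= fib m.+2)%N ->
  rot_code (c + fib m.+3) = rot_code c.
Proof.
move=> /andP[c_gt0 c_le].
have [m_le1 | m_ge2] := leqP m 1.
  have [r1 r2 r3 r4 r5] := rot_code_small.
  case: m m_le1 c_le => [|[|//]] _ /= c_le.
  - have -> : c = 1%N by lia.
    by rewrite r3 r1.
  - have [->|->] : c = 1%N \/ c = 2%N by lia.
    + by rewrite r4 r1.
    + by rewrite r5 r2.
(* Adding F_(m+3) moves {c phi} by rho^(m+3), less than its distance
   rho^(m+2) to 0, 1 and 2 - phi. *)
have c_lt : (c.+1 < fib m.+3)%N.
  by rewrite fibSS; have := ltn_fib m.-1; rewrite (ltn_predK m_ge2); lia.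
have e_small : Rabs (- (- rho) ^ m.+3) < rho ^ m.+2.
  rewrite Rabs_Ropp Rabs_opp_rho_pow -tech_pow_Rmult.
  by have := rho_bounds; have := rho_pow_gt0 m.+2; nra.
have shiftE : INR (fib m.+3) * phi = IZR (Z.of_nat (fib m.+4)) + - (- rho) ^ m.+3.
  by rewrite -INR_IZR_INZ; have := fibS_sub_mul_phi m.+3; lra.
have [range side] := shift_keeps_side e_small
  (frac_phi_bounds (isT : (0 < m.+2)%N) (ltac:(lia) : (0 < c < fib m.+3)%N))
  (dist_frac_phi_2_sub_phi (isT : (0 < m.+2)%N) c_lt).
by rewrite /rot_code (frac_phi_add shiftE range); do 2 case: Rlt_dec => ? //=; tauto.
Qed.

Lemma fibword_mkseq m : fibword m = mkseq (fun i => rot_code i.+1) (fib m.+2).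
Proof.
have [r1 r2 _ _ _] := rot_code_small.
elim/ltn_ind: m => -[|[|m]] IH.
- by rewrite (_ : fib 2 = 1%N) // /mkseq /= r1.
- by rewrite (_ : fib 3 = 2%N) // /mkseq /= r1 r2.
rewrite fibwordSS !IH // [fib m.+4]fibSS mkseqD; congr (_ ++ _).
apply/eq_in_map => i; rewrite mem_iota => /andP[_ i_lt] /=.
by rewrite addnC -addSn rot_code_add_fib.
Qed.

Lemma fibw_rot_code i : fibw i = rot_code i.+1.
Proof.
by rewrite /fibw -/(fibword i.+1) fibword_mkseq nth_mkseq // ltnW // ltn_fib.
Qed.

(** * Covering by a monotone walk *)

Lemma up_steps_hit (Y : nat -> R) g G T : 0 < g ->
  (forall K, g <= Y K.+1 - Y K <= G) -> Y 0%N < T -> exists K, T <= Y K < T + G.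
Proof.
move=> g_gt0 step Y0_lt.
have [N N_big] := INR_archimed g (T - Y 0%N) g_gt0.
have : T <= Y N.
  suff : Y 0%N + INR N * g <= Y N by lra.
  elim: (N) => [|K IH]; first by rewrite /=; lra.
  by rewrite S_INR; have := step K; lra.
elim: N {N_big} => [|N IH] YN_ge; first lra.
have [YN_lt | YN_le] := Rlt_le_dec (Y N) T; last exact: IH.
by exists N.+1; have := step N; lra.
Qed.

Lemma down_steps_hit (Y : nat -> R) g G T : 0 < g ->
  (forall K, g <= Y K - Y K.+1 <= G) -> T <= Y 0%N -> exists K, T - G <= Y K < T.
Proof.
move=> g_gt0 step Y0_ge.
have [N N_big] := INR_archimed g (Y 0%N - T) g_gt0.
have : Y N < T.
  suff : Y N <= Y 0%N - INR N * g by lra.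
  elim: (N) => [|K IH]; first by rewrite /=; lra.
  by rewrite S_INR; have := step K; lra.
elim: N {N_big} => [|N IH] YN_lt; first lra.
have [YN_lt' | YN_ge] := Rlt_le_dec (Y N) T; first exact: IH.
by exists N.+1; have := step N; lra.
Qed.

(* j |-> j + F_(m+1) if j < F_m, else j - F_m, keeps j in [0, F_(m+2)) and
   moves j phi modulo 1 by rho (- rho)^m or (- rho)^m: all steps go in the
   same direction and have size between rho^(m+1) and rho^m. *)
Section GoldenWalk.

Variable m : nat.

Fixpoint walk K : nat :=
  if K is K'.+1 then
    if (walk K' < fib m)%N then (walk K' + fib m.+1)%N else (walk K' - fib m)%N
  else 0%N.

Fixpoint walk_disp K : R :=
  if K is K'.+1 then
    walk_disp K' + (if (walk K' < fib m)%N then rho else 1) * (- rho) ^ m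
  else 0.

Lemma walk_lt K : (walk K < fib m.+2)%N.
Proof.
by elim: K => [|K]; [exact: fib_gt0 | cbn [walk]; rewrite fibSS; case: ifP; lia].
Qed.

Lemma walk_phi K : exists z, INR (walk K) * phi = walk_disp K + IZR z.
Proof.
elim: K => [|K [z IH]]; first by exists 0%Z; rewrite /=; ring.
have := fibS_sub_mul_phi m; have := fibS_sub_mul_phi m.+1; rewrite [(- rho) ^ m.+1]/=.
cbn [walk walk_disp]; case: ifP => [_ | /negbT]; rewrite -?leqNgt.
  exists (z + Z.of_nat (fib m.+2))%Z.
  by rewrite plus_INR plus_IZR -INR_IZR_INZ; lra.
move=> walk_ge; exists (z - Z.of_nat (fib m.+1))%Z.
by rewrite minus_INR; [rewrite minus_IZR -INR_IZR_INZ; lra | apply/leP].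
Qed.

End GoldenWalk.

Lemma frac_phi_hits_interval m c0 lo hi : 0 <= lo -> hi <= 1 -> rho ^ m <= hi - lo ->
  exists2 r, (r < fib m.+2)%N & lo <= frac_phi (c0 + r) < hi.
Proof.
move=> lo_ge0 hi_le1 wide.
pose Y K := frac_phi c0 + walk_disp m K.
have hit K (w : Z) : lo <= Y K - IZR w < hi ->
    exists2 r, (r < fib m.+2)%N & lo <= frac_phi (c0 + r) < hi.
  move=> YK_range; exists (walk m K); first exact: walk_lt.
  have [z0 c0E] := frac_phi_int c0; have [z wE] := walk_phi m K.
  rewrite /frac_phi plus_INR Rmult_plus_distr_r c0E wE.
  by rewrite /Y in YK_range; rewrite (@frac_partE _ (z0 + z + w)%Z) ?plus_IZR; lra.
have Y0 : Y 0%N = frac_phi c0 by rewrite /Y /=; ring.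
have := frac_phi_range c0; have := rho_bounds; have G_gt0 := rho_pow_gt0 m.
have step K : Y K.+1 - Y K = (if (walk m K < fib m)%N then rho else 1) * (- rho) ^ m.
  by rewrite /Y /=; ring.
case: (opp_rho_pow_cases m) => sign [r_gt r_lt] c0_range.
- have [K YK] : exists K, lo + 1 <= Y K < lo + 1 + rho ^ m.
    apply: (up_steps_hit (Y := Y) (g := rho * rho ^ m)) => [|K|]; [nra | | lra].
    by rewrite step sign; case: ifP; nra.
  by apply: (hit K 1%Z); lra.
- have [K YK] : exists K, hi - 1 - rho ^ m <= Y K < hi - 1.
    apply: (down_steps_hit (Y := Y) (g := rho * rho ^ m)) => [|K|]; [nra | | lra].
    by have := step K; rewrite sign; case: ifP; nra.
  by apply: (hit K (-1)%Z); lra.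
Qed.

(** * Distinct blocks *)

Lemma crossing_interval b e G : 0 < G -> G <= b <= 1 - G -> G <= Rabs e <= 1 - G ->
  exists lo hi, [/\ 0 <= lo, hi <= 1, G <= hi - lo &
    forall y, lo <= y < hi -> 0 <= y + e < 1 /\ (y < b <-> ~ y + e < b)].
Proof.
move=> G_gt0 b_range; rewrite /Rabs; case: Rcase_abs => [e_lt0 | e_ge0] e_range.
- exists (Rmax b (- e)), (Rmin 1 (b - e)).
  rewrite /Rmax /Rmin; case: Rle_dec; case: Rle_dec => ? ?;
    by split; [lra | lra | lra | move=> y ?; split; [|split=> ?]; lra].
- exists (Rmax 0 (b - e)), (Rmin b (1 - e)).
  rewrite /Rmax /Rmin; case: Rle_dec; case: Rle_dec => ? ?;
    by split; [lra | lra | lra | move=> y ?; split; [|split=> ?]; lra].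
Qed.

Lemma block_shift_bounds m t : (2 <= m)%N -> (0 < t)%N ->
  INR t * 2 + 2 <= sqrt 5 * INR (fib m.+1) ->
  rho ^ m <= Rabs (INR t * 2 * (INR (fib m.+1) * phi - INR (fib m.+2)))
          <= 1 - rho ^ m.
Proof.
move=> m_ge2 t_gt0 t_small.
have [r_gt r_lt] := rho_bounds; have P_gt0 := rho_pow_gt0 m.
have P_le := rho_pow_le_sq m_ge2.
have t_ge1 : 1 <= INR t by apply: (le_INR 1); apply/leP.
have -> : INR (fib m.+1) * phi - INR (fib m.+2) = rho * (- rho) ^ m.
  by have := fibS_sub_mul_phi m.+1; rewrite [(- rho) ^ m.+1]/=; lra.
rewrite !Rabs_mult Rabs_opp_rho_pow !Rabs_right; try lra.
have phi_rho_pow : phi ^ m.+1 * rho ^ m.+1 = 1.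
  by rewrite -Rpow_mult_distr Rmult_comm rho_phi pow1.
have : (INR t * 2 + 2) * rho ^ m.+1 <= 1 + rho ^ m.+1 * rho ^ m.+1.
  rewrite binet in t_small; have := rho_pow_gt0 m.+1.
  by case: (opp_rho_pow_cases m.+1) => sign; rewrite sign in t_small; nra.
rewrite [rho ^ m.+1]/= => bound.
have two_t_rho : 1 <= INR t * 2 * rho by nra.
have sq_small : rho * rho ^ m * (rho * rho ^ m) <= (2 * rho - 1) * rho ^ m.
  have := rho_sq; have : rho ^ m * rho ^ m <= rho * rho * rho ^ m by nra.
  nra.
split; nra.
Qed.

Lemma double_succ_le_sqrt5_mul k F t : ((2 * k) ^ 2 <= 5 * F ^ 2)%N -> (t < k)%N ->
  INR t * 2 + 2 <= sqrt 5 * INR F.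
Proof.
move=> k_le t_lt.
have : INR t + 1 <= INR k by rewrite -S_INR; apply/le_INR/leP.
suff : 2 * INR k <= sqrt 5 * INR F by lra.
apply: Rsqr_incr_0_var; last by have := sqrt_pos 5; have := pos_INR F; nra.
rewrite /Rsqr; have -> : sqrt 5 * INR F * (sqrt 5 * INR F) = 5 * (INR F * INR F).
  by have := sqrt_sqrt 5; nra.
have : INR ((2 * k) * (2 * k)) <= INR (5 * (F * F)) by apply/le_INR/leP; rewrite !mulnn.
by rewrite -!multE !mult_INR /=; nra.
Qed.

Lemma rot_code_block_mismatch m t p : (2 <= m)%N -> (0 < t)%N ->
  INR t * 2 + 2 <= sqrt 5 * INR (fib m.+1) ->
  exists2 r, (r < 2 * fib m.+1)%N &
    rot_code (p + r) <> rot_code (p + r + t * (2 * fib m.+1)).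
Proof.
move=> m_ge2 t_gt0 t_small.
set e := INR t * 2 * (INR (fib m.+1) * phi - INR (fib m.+2)).
have e_range : rho ^ m <= Rabs e <= 1 - rho ^ m.
  exact: block_shift_bounds.
have b_range : rho ^ m <= 2 - phi <= 1 - rho ^ m.
  have -> : 2 - phi = rho * rho by rewrite rho_sq /rho; ring.
  by have := rho_pow_le_sq m_ge2; have := rho_sq; have := rho_bounds; lra.
have [lo [hi [lo_ge0 hi_le1 wide crosses]]] :=
  crossing_interval (rho_pow_gt0 m) b_range e_range.
have [r r_lt hit] := frac_phi_hits_interval p lo_ge0 hi_le1 wide.
exists r; first by move: r_lt; rewrite fibSS; have := fib_leqS m; lia.
have [range side] := crosses _ hit.
have shiftE :
    INR (t * (2 * fib m.+1)) * phi = IZR (Z.of_nat (t * (2 * fib m.+2))) + e.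
  by rewrite -INR_IZR_INZ -!multE !mult_INR /e /=; ring.
by rewrite /rot_code (frac_phi_add shiftE range); do 2 case: Rlt_dec => ? //=; tauto.
Qed.

Local Close Scope R_scope.

Theorem proposition17 :
  forall (x n k : nat), 0 < n ->
    (2 * k) ^ 2 <= 5 * fib n ^ 2 < (2 * k + 2) ^ 2 ->
    antipower_at x k (2 * fib n).
Proof.
move=> x n k n_gt0 /andP[k_le _] i j ij jk.
have [n_le2 | n_gt2] := leqP n 2.
  have fibn1 : fib n = 1 by case: n n_gt0 n_le2 {k_le} => [|[|[|]]].
  by move: k_le; rewrite fibn1 -!mulnn; nia.
have [m nE m_ge2] : exists2 m, n = m.+1 & 1 < m by exists n.-1; lia.
subst n.
have t_small :=
  double_succ_le_sqrt5_mul (t := j - i) k_le (leq_ltn_trans (leq_subr i j) jk).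
have [r r_lt differ] := rot_code_block_mismatch (x + i * (2 * fib m.+1)).+1
  m_ge2 (ltac:(lia) : 0 < j - i) t_small.
apply/eqP => /(congr1 (nth 0 ^~ r)); rewrite !nth_mkseq // !fibw_rot_code => same.
apply: differ; rewrite -addSn same; congr rot_code; nia.
Qed.
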